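(* Assume $h\in\mathcal H$, where $\mathcal H=\{h: h>S/\ln(1+S/\lambda_0)-S-\lambda_0\}$. (iii) $J_{\rm K\text{-}L}$ attains its unique minimum over $\Theta$ at a point $\hat\vartheta$, which is the unique solution of $J'_{\rm K\text{-}L}(\hat\vartheta)=0$. Its location depends on the sign of $h$: - if $h>0$, then $\hat\vartheta\in(\vartheta_0-\delta,\vartheta_0)$; - if $h<0$, then $\hat\vartheta\in(\vartheta_0,\vartheta_0+\delta)$; - if $h=0$, then $\hat\vartheta=\vartheta_0$. (iv) If in addition $h\neq0$, there exist constants $m,M>0$ such that for all $\vartheta\in\Theta$ $$m|\vartheta-\hat\vartheta|\le|J'_{\rm K\text{-}L}(\vartheta)|\le M|\vartheta-\hat\vartheta|$$ and $$\frac m2(\vartheta-\hat\vartheta)^2\le J_{\rm K\text{-}L}(\vartheta)-J_{\rm K\text{-}L}(\hat\vartheta)\le\frac M2(\vartheta-\hat\vartheta)^2.$$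
   Context: Fix constants $S>0$, $\lambda_0>0$, $\kappa\in(0,1/2)$, $\delta>0$, $\tau>0$, and reals $\alpha<\beta$ such that $(\alpha-\delta,\beta+\delta)\subset(0,\tau-\delta)$. Put $\Theta_0=(\alpha,\beta)$ and $\Theta=(\alpha-\delta,\beta+\delta)$. Let $$\psi(x)=(x/\delta)^\kappa\mathbf 1_{\{0<x<\delta\}}+\mathbf 1_{\{x\ge\delta\}}.$$ The theoretical intensity is $\lambda(\vartheta,t)=S\psi(t-\vartheta)+\lambda_0$ for $t\in[0,\tau]$, $\vartheta\in\Theta$. The true intensity is $\lambda_*(\vartheta_0,t)=(S+h)\psi(t-\vartheta_0)+\lambda_0$, with fixed $\vartheta_0\in\Theta_0$ and fixed $h\in\mathbb R$. The Kullback–Leibler divergence is $$J_{\rm K\text{-}L}(\vartheta)=\int_{\vartheta\wedge\vartheta_0}^\tau\Bigl[\frac{\lambda(\vartheta,t)}{\lambda_*(\vartheta_0,t)}-1-\ln\frac{\lambda(\vartheta,t)}{\lambda_*(\vartheta_0,t)}\Bigr]\lambda_*(\vartheta_0,t)\,dt,\qquad\vartheta\in\Theta.$$ *)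

From Stdlib Require Import Reals.
From Coquelicot Require Import Coquelicot.
Open Scope R_scope.

Definition psi (kappa delta x : R) : R :=
  if Rlt_dec 0 x then
    (if Rlt_dec x delta then Rpower (x / delta) kappa else 1)
  else 0.

Definition lam (S lambda0 kappa delta theta t : R) : R :=
  S * psi kappa delta (t - theta) + lambda0.

Definition lam_star (S h lambda0 kappa delta theta0 t : R) : R :=
  (S + h) * psi kappa delta (t - theta0) + lambda0.

Definition J_KL (S h lambda0 kappa delta tau theta0 theta : R) : R :=
  RInt (fun t =>
          let r := lam S lambda0 kappa delta theta t
                   / lam_star S h lambda0 kappa delta theta0 t in
          (r - 1 - ln r) * lam_star S h lambda0 kappa delta theta0 t)
       (Rmin theta theta0) tau.

From Stdlib Require Import Reals Lra.
From Coquelicot Require Import Coquelicot.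
Open Scope R_scope.

(* For [theta] in [(0, tau - delta)] the divergence splits at [theta] and
   [theta + delta]; on the rising part the substitution
   [t = theta + delta q(w)], [q(w) = w^(1/kappa)], followed by an integration
   by parts shows that [J' = S (F - 1)] with
     [F theta = (S + h) G (theta - theta0) + l0 c0],
     [G s = \int_0^1 psi (s + delta q(w)) / (S w + l0) dw],
     [c0 = ln (1 + S/l0) / S].
   [G] is continuous and nondecreasing, equals [0] below [-delta] and [c0]
   above [delta], is steep on [(-delta, delta)] (concavity of [psi]) and is
   locally Lipschitz away from [0] (concavity of [psi] on the right, convexity
   of [q] on the left).  The condition on [h] makes [F - 1] change sign on
   [[theta0 - delta, theta0 + delta]], which yields the root [thhat]; the sign
   of [F theta0 - 1 = h G 0] locates it.  Steepness turns into coercivity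
   [J'(th) (th - thhat) >= m (th - thhat)^2], local Lipschitz continuity (for
   [h <> 0]) into [|J'(th)| <= M |th - thhat|], and the mean value theorem
   turns both into the quadratic bounds on [J]. *)


Lemma min_of_derivative_sign (g dg : R -> R) lo hi x0 :
  (forall x, lo < x < hi -> is_derive g x (dg x)) -> lo < x0 < hi ->
  dg x0 = 0 -> (forall x, lo < x < hi -> 0 <= dg x * (x - x0)) ->
  forall x, lo < x < hi -> g x0 <= g x.
Proof.
  intros Hd Hx0 Hz Hsign x Hx.
  destruct (MVT_gen g x0 x dg) as [z [Hz_in Hmvt]].
  - intros y Hy. apply Hd. unfold Rmin, Rmax in Hy.
    destruct (Rle_dec x0 x); lra.
  - intros y Hy. apply derivable_continuous_pt. exists (dg y).
    apply is_derive_Reals, Hd. unfold Rmin, Rmax in Hy.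
    destruct (Rle_dec x0 x); lra.
  - assert (Hz_lh : lo < z < hi)
      by (unfold Rmin, Rmax in Hz_in; destruct (Rle_dec x0 x); lra).
    destruct (Req_dec z x0) as [-> | Hne]; [rewrite Hz in Hmvt; lra|].
    assert (Hs := Hsign z Hz_lh).
    unfold Rmin, Rmax in Hz_in; destruct (Rle_dec x0 x).
    + assert (0 <= dg z) by (apply Rmult_le_reg_r with (z - x0); lra).
      nra.
    + assert (dg z <= 0) by (apply Rmult_le_reg_r with (x0 - z); lra).
      nra.
Qed.

Lemma quadratic_growth_lower (f df : R -> R) lo hi x0 m :
  (forall x, lo < x < hi -> is_derive f x (df x)) -> lo < x0 < hi ->
  df x0 = 0 -> (forall x, lo < x < hi -> m * (x - x0) ^ 2 <= df x * (x - x0)) ->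
  forall x, lo < x < hi -> m / 2 * (x - x0) ^ 2 <= f x - f x0.
Proof.
  intros Hd Hx0 Hz Hm x Hx.
  assert (H := min_of_derivative_sign (fun y => f y - m / 2 * (y - x0) ^ 2)
                 (fun y => df y - m * (y - x0)) lo hi x0).
  cbv beta in H. assert (H' : f x0 - m / 2 * (x0 - x0) ^ 2 <= f x - m / 2 * (x - x0) ^ 2).
  { apply H; auto.
    - intros y Hy. apply (is_derive_minus f (fun y => m / 2 * (y - x0) ^ 2)).
      + apply Hd; auto.
      + auto_derive; auto. field.
    - rewrite Hz. ring.
    - intros y Hy. assert (Hmy := Hm y Hy). nra. }
  lra.
Qed.

Lemma quadratic_growth_upper (f df : R -> R) lo hi x0 M :
  (forall x, lo < x < hi -> is_derive f x (df x)) -> lo < x0 < hi ->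
  df x0 = 0 -> (forall x, lo < x < hi -> df x * (x - x0) <= M * (x - x0) ^ 2) ->
  forall x, lo < x < hi -> f x - f x0 <= M / 2 * (x - x0) ^ 2.
Proof.
  intros Hd Hx0 Hz HM x Hx.
  assert (H := min_of_derivative_sign (fun y => M / 2 * (y - x0) ^ 2 - f y)
                 (fun y => M * (y - x0) - df y) lo hi x0).
  cbv beta in H. assert (H' : M / 2 * (x0 - x0) ^ 2 - f x0 <= M / 2 * (x - x0) ^ 2 - f x).
  { apply H; auto.
    - intros y Hy. apply (is_derive_minus (fun y => M / 2 * (y - x0) ^ 2) f).
      + auto_derive; auto. field.
      + apply Hd; auto.
    - rewrite Hz. ring.
    - intros y Hy. assert (HMy := HM y Hy). nra. }
  lra.
Qed.

Lemma nondecreasing_coercive (F : R -> R) x0 eta c W :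
  (forall a b, a <= b -> F a <= F b) -> 0 < eta -> 0 < c -> 0 < W ->
  (forall a b, x0 - eta <= a -> a <= b -> b <= x0 + eta -> c * (b - a) <= F b - F a) ->
  forall x, Rabs (x - x0) <= W ->
    c * (eta / (eta + W)) * (x - x0) ^ 2 <= (F x - F x0) * (x - x0).
Proof.
  intros Hmono Heta Hc HW Hslope x Hx. apply Rabs_le_between in Hx.
  set (r := eta / (eta + W)).
  assert (Hr : 0 < r <= 1) by (unfold r; split;
    [apply Rdiv_lt_0_compat | apply Rmult_le_reg_r with (eta + W);
      [| unfold Rdiv; rewrite Rmult_assoc, Rinv_l]]; lra).
  assert (Hreta : r * (eta + W) = eta) by (unfold r; field; lra).
  set (u := x - x0). set (dF := F x - F x0).
  assert (Hcr : 0 < c * r) by nra.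
  assert (Hsq : c * r * u ^ 2 <= c * u ^ 2).
  { apply Rmult_le_compat_r; [apply pow2_ge_0 | nra]. }
  destruct (Rle_dec x0 x) as [Hle | Hlt].
  - assert (Hu : 0 <= u) by (unfold u; lra).
    destruct (Rle_dec u eta).
    + assert (Hs := Hslope x0 x ltac:(lra) Hle ltac:(unfold u in *; lra)).
      fold u dF in Hs.
      assert (c * u * u <= dF * u) by (apply Rmult_le_compat_r; lra). nra.
    + assert (Hs := Hslope x0 (x0 + eta) ltac:(lra) ltac:(lra) ltac:(lra)).
      assert (Hm := Hmono (x0 + eta) x ltac:(unfold u in *; lra)).
      assert (Hgap : c * eta <= dF) by (unfold dF; lra).
      assert (c * r * u <= c * eta) by (unfold u in *; nra).
      assert (c * r * u * u <= dF * u) by (apply Rmult_le_compat_r; lra). nra.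
  - assert (Hu : u < 0) by (unfold u; lra).
    destruct (Rle_dec (- u) eta).
    + assert (Hs := Hslope x x0 ltac:(unfold u in *; lra) ltac:(lra) ltac:(lra)).
      replace (x0 - x) with (- u) in Hs by (unfold u; ring).
      assert (dF <= c * u) by (unfold dF in *; lra).
      assert (c * u * (- u) >= dF * (- u)) by (apply Rmult_ge_compat_r; lra). nra.
    + assert (Hs := Hslope (x0 - eta) x0 ltac:(lra) ltac:(lra) ltac:(lra)).
      assert (Hm := Hmono x (x0 - eta) ltac:(unfold u in *; lra)).
      assert (Hgap : dF <= - (c * eta)) by (unfold dF; lra).
      assert (c * r * (- u) <= c * eta) by (unfold u in *; nra).
      assert (c * r * (- u) * (- u) <= - dF * (- u)) by (apply Rmult_le_compat_r; lra). nra.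
Qed.

Lemma bounded_pointwise_lipschitz (F : R -> R) x0 rho L B :
  0 < rho ->
  (forall x, Rabs (x - x0) <= rho -> Rabs (F x - F x0) <= L * Rabs (x - x0)) ->
  (forall x, Rabs (F x - F x0) <= B) ->
  forall x, Rabs (F x - F x0) <= Rmax L (B / rho) * Rabs (x - x0).
Proof.
  intros Hrho Hloc Hbnd x.
  assert (HL := Rmax_l L (B / rho)). assert (HB := Rmax_r L (B / rho)).
  assert (Ha := Rabs_pos (x - x0)).
  destruct (Rle_dec (Rabs (x - x0)) rho) as [Hnear | Hfar].
  - assert (Hx := Hloc x Hnear). nra.
  - assert (HB0 : 0 <= B) by exact (Rle_trans _ _ _ (Rabs_pos _) (Hbnd x0)).
    assert (B <= B / rho * Rabs (x - x0)).
    { replace B with (B / rho * rho) at 1 by (field; lra).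
      apply Rmult_le_compat_l; [apply Rdiv_le_0_compat|]; lra. }
    assert (Hx := Hbnd x). nra.
Qed.

Lemma nondecreasing_lipschitz_at (F : R -> R) x0 rho L :
  (forall a b, a <= b -> F a <= F b) ->
  (forall a b, x0 - rho <= a -> a <= b -> b <= x0 + rho -> F b - F a <= L * (b - a)) ->
  forall x, Rabs (x - x0) <= rho -> Rabs (F x - F x0) <= L * Rabs (x - x0).
Proof.
  intros Hmono Hinc x Hx. apply Rabs_le_between in Hx.
  destruct (Rle_dec x0 x) as [Hle | Hlt].
  - assert (H := Hmono x0 x Hle). assert (H' := Hinc x0 x ltac:(lra) Hle ltac:(lra)).
    rewrite !Rabs_pos_eq; lra.
  - assert (H := Hmono x x0 ltac:(lra)). assert (H' := Hinc x x0 ltac:(lra) ltac:(lra) ltac:(lra)).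
    rewrite !Rabs_left1 by lra. lra.
Qed.

Lemma abs_lower_of_coercive m t y : m * t ^ 2 <= y * t -> m * Rabs t <= Rabs y.
Proof.
  intros H. destruct (Req_dec t 0) as [-> | Ht].
  - rewrite Rabs_R0, Rmult_0_r. apply Rabs_pos.
  - assert (Hpos : 0 < Rabs t) by (apply Rabs_pos_lt; auto).
    apply Rmult_le_reg_r with (Rabs t); auto.
    rewrite <- Rabs_mult. replace (m * Rabs t * Rabs t) with (m * t ^ 2)
      by (rewrite <- pow2_abs; ring).
    eapply Rle_trans; [exact H | apply Rle_abs].
Qed.

Lemma product_upper_of_abs M t y : Rabs y <= M * Rabs t -> y * t <= M * t ^ 2.
Proof.
  intros H. eapply Rle_trans; [apply Rle_abs|]. rewrite Rabs_mult.
  replace (M * t ^ 2) with (M * Rabs t * Rabs t)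
    by (rewrite <- pow2_abs; ring).
  apply Rmult_le_compat_r; [apply Rabs_pos | auto].
Qed.

Lemma coercive_critical_point (f D : R -> R) lo hi x0 m :
  (forall x, lo < x < hi -> is_derive f x (D x)) -> lo < x0 < hi -> D x0 = 0 -> 0 < m ->
  (forall x, lo < x < hi -> m * (x - x0) ^ 2 <= D x * (x - x0)) ->
  (forall x, lo < x < hi -> x <> x0 -> f x0 < f x) /\
  (forall x, lo < x < hi -> (D x = 0 <-> x = x0)) /\
  (forall x, lo < x < hi -> m * Rabs (x - x0) <= Rabs (D x)) /\
  (forall x, lo < x < hi -> m / 2 * (x - x0) ^ 2 <= f x - f x0).
Proof.
  intros Hd Hx0 Hz Hm Hco.
  assert (Hq := quadratic_growth_lower f D lo hi x0 m Hd Hx0 Hz Hco).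
  assert (Ha : forall x, lo < x < hi -> m * Rabs (x - x0) <= Rabs (D x))
    by (intros; apply abs_lower_of_coercive; auto).
  split; [|split; [|split]]; auto.
  - intros x Hx Hne. assert (H := Hq x Hx).
    assert (0 < (x - x0) ^ 2) by (apply pow2_gt_0; lra). nra.
  - intros x Hx. split; [|intros ->; auto].
    intros H0. assert (H := Ha x Hx). rewrite H0, Rabs_R0 in H.
    destruct (Req_dec x x0) as [| Hne]; auto.
    assert (0 < Rabs (x - x0)) by (apply Rabs_pos_lt; lra). nra.
Qed.

(* Coquelicot states its results in a normed module; [eq_in_R] retypes an
   equation as an equation in [R] so that [ring] and [lra] apply. *)
Ltac eq_in_R := match goal with |- @eq _ ?a ?b => change (@eq R a b) end.

Ltac destruct_minmax := unfold Rmin, Rmax in *; repeat match goal with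
  | |- context [Rle_dec ?a ?b] => destruct (Rle_dec a b)
  | H: context [Rle_dec ?a ?b] |- _ => destruct (Rle_dec a b) end.

Ltac continuity_const := apply continuity_pt_const; intros ? ?; reflexivity.

(* Real-valued specialisations of Coquelicot's integral algebra, stated with
   the operations of [R] so that they can be used for rewriting. *)

Lemma ex_RInt_of_continuous (f : R -> R) a b :
  (forall z, Rmin a b <= z <= Rmax a b -> continuous f z) -> ex_RInt f a b.
Proof. intros H. apply (@ex_RInt_continuous R_CompleteNormedModule). auto. Qed.

Lemma RInt_const_R a b c : RInt (fun _ => c) a b = (b - a) * c.
Proof. rewrite RInt_const. reflexivity. Qed.

Lemma RInt_scal_R (f : R -> R) a b c :
  ex_RInt f a b -> RInt (fun x => c * f x) a b = c * RInt f a b.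
Proof. intros H. exact (RInt_scal f a b c H). Qed.

Lemma RInt_plus_R (f g : R -> R) a b : ex_RInt f a b -> ex_RInt g a b ->
  RInt (fun x => f x + g x) a b = RInt f a b + RInt g a b.
Proof. intros H1 H2. exact (RInt_plus f g a b H1 H2). Qed.

Lemma RInt_minus_R (f g : R -> R) a b : ex_RInt f a b -> ex_RInt g a b ->
  RInt (fun x => f x - g x) a b = RInt f a b - RInt g a b.
Proof. intros H1 H2. exact (RInt_minus f g a b H1 H2). Qed.

Lemma ex_RInt_scal_R (f : R -> R) a b c :
  ex_RInt f a b -> ex_RInt (fun x => c * f x) a b.
Proof. intros H. exact (ex_RInt_scal f a b c H). Qed.

Lemma ex_RInt_plus_R (f g : R -> R) a b : ex_RInt f a b -> ex_RInt g a b ->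
  ex_RInt (fun x => f x + g x) a b.
Proof. intros H1 H2. exact (ex_RInt_plus f g a b H1 H2). Qed.

Lemma ex_RInt_minus_R (f g : R -> R) a b : ex_RInt f a b -> ex_RInt g a b ->
  ex_RInt (fun x => f x - g x) a b.
Proof. intros H1 H2. exact (ex_RInt_minus f g a b H1 H2). Qed.

Lemma RInt_ext_R (f g : R -> R) a b :
  (forall x, Rmin a b < x < Rmax a b -> f x = g x) -> RInt f a b = RInt g a b.
Proof. intros H. apply RInt_ext. exact H. Qed.

Lemma RInt_Chasles_R (f : R -> R) a b c : ex_RInt f a b -> ex_RInt f b c ->
  RInt f a b + RInt f b c = RInt f a c.
Proof. intros H1 H2. exact (RInt_Chasles f a b c H1 H2). Qed.

Lemma is_derive_RInt_upper (f : R -> R) a x : (forall y, continuous f y) ->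
  is_derive (fun b => RInt f a b) x (f x).
Proof.
  intros Hc. apply (is_derive_RInt f (fun b => RInt f a b) a x).
  - exists (mkposreal 1 Rlt_0_1). intros y _.
    apply (@RInt_correct R_CompleteNormedModule).
    apply ex_RInt_of_continuous. intros; apply Hc.
  - apply Hc.
Qed.

Lemma RInt_lower_on_subinterval (f : R -> R) a b c :
  0 <= a <= b -> b <= 1 ->
  (forall x, 0 <= x <= 1 -> continuous f x) ->
  (forall x, 0 < x < 1 -> 0 <= f x) ->
  (forall x, a < x < b -> c <= f x) -> c * (b - a) <= RInt f 0 1.
Proof.
  intros Hab Hb Hc H0 H1.
  assert (E : forall u v, 0 <= u <= v -> v <= 1 -> ex_RInt f u v).
  { intros u v Hu Hv. apply ex_RInt_of_continuous. intros z Hz. apply Hc.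
    destruct_minmax; lra. }
  rewrite <- (RInt_Chasles_R f 0 a 1), <- (RInt_Chasles_R f a b 1)
    by (apply E; lra).
  assert (0 <= RInt f 0 a)
    by (apply RInt_ge_0; try lra; [apply E; lra | intros; apply H0; lra]).
  assert (0 <= RInt f b 1)
    by (apply RInt_ge_0; try lra; [apply E; lra | intros; apply H0; lra]).
  assert (RInt (fun _ => c) a b <= RInt f a b).
  { apply RInt_le; try lra. apply ex_RInt_const. apply E; lra.
    intros; apply H1; lra. }
  rewrite RInt_const_R in *. lra.
Qed.

Lemma RInt_translate (f : R -> R) a b e : ex_RInt f (a + e) (b + e) ->
  RInt (fun x => f (x + e)) a b = RInt f (a + e) (b + e).
Proof.
  intros H. assert (Hl := RInt_comp_lin f 1 e a b).
  replace (1 * a + e) with (a + e) in Hl by ring.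
  replace (1 * b + e) with (b + e) in Hl by ring.
  rewrite <- (Hl H). apply RInt_ext_R. intros x _.
  change (f (x + e) = 1 * f (1 * x + e)). rewrite Rmult_1_l. ring_simplify (1 * x). ring.
Qed.

Lemma RInt_translate_increment (f : R -> R) e : 0 <= e ->
  (forall x, continuous f x) -> (forall x, 0 <= f x <= 1) ->
  RInt (fun w => f (w + e) - f w) 0 1 <= e.
Proof.
  intros He Hc Hf.
  assert (E : forall u v, ex_RInt f u v)
    by (intros; apply ex_RInt_of_continuous; intros; apply Hc).
  assert (Et : ex_RInt (fun w => f (w + e)) 0 1).
  { apply ex_RInt_of_continuous. intros z _.
    apply (continuous_comp (fun w => w + e) f); [|apply Hc].
    apply continuity_pt_filterlim, continuity_pt_plus;
      [apply continuity_pt_id | continuity_const]. }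
  rewrite RInt_minus_R, RInt_translate, Rplus_0_l by auto.
  rewrite <- (RInt_Chasles_R f e 1 (1 + e)), <- (RInt_Chasles_R f 0 e 1) by auto.
  assert (RInt f 1 (1 + e) <= RInt (fun _ => 1) 1 (1 + e))
    by (apply RInt_le; [lra | apply E | apply ex_RInt_const | intros; apply Hf]).
  assert (0 <= RInt f 0 e) by (apply RInt_ge_0; [lra | apply E | intros; apply Hf]).
  rewrite RInt_const_R in *. lra.
Qed.

Lemma RInt_by_parts (f df g dg : R -> R) a b : a <= b ->
  (forall x, a <= x <= b -> is_derive f x (df x)) ->
  (forall x, a <= x <= b -> is_derive g x (dg x)) ->
  (forall x, a <= x <= b -> continuous df x) ->
  (forall x, a <= x <= b -> continuous dg x) ->
  RInt (fun x => df x * g x) a b = f b * g b - f a * g a - RInt (fun x => f x * dg x) a b.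
Proof.
  intros Hab Hf Hg Hdf Hdg.
  assert (Hcf : forall x, a <= x <= b -> continuous f x)
    by (intros x Hx; apply (ex_derive_continuous f); exists (df x); auto).
  assert (Hcg : forall x, a <= x <= b -> continuous g x)
    by (intros x Hx; apply (ex_derive_continuous g); exists (dg x); auto).
  assert (E1 : ex_RInt (fun x => df x * g x) a b).
  { apply ex_RInt_of_continuous. rewrite Rmin_left, Rmax_right by lra.
    intros x Hx. apply (continuous_mult df g); auto. }
  assert (E2 : ex_RInt (fun x => f x * dg x) a b).
  { apply ex_RInt_of_continuous. rewrite Rmin_left, Rmax_right by lra.
    intros x Hx. apply (continuous_mult f dg); auto. }
  assert (Hprod : is_RInt (fun x => df x * g x + f x * dg x) a b
                    (minus (f b * g b) (f a * g a))).
  { apply (is_RInt_derive (fun x => f x * g x)); rewrite Rmin_left, Rmax_right by lra.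
    - intros x Hx. apply (is_derive_mult f g); auto. intros; apply Rmult_comm.
    - intros x Hx. apply (continuous_plus (fun x => df x * g x) (fun x => f x * dg x));
        [apply (continuous_mult df g) | apply (continuous_mult f dg)]; auto. }
  apply (is_RInt_unique (V := R_CompleteNormedModule)) in Hprod.
  rewrite RInt_plus_R in Hprod by auto.
  change (minus (f b * g b) (f a * g a)) with (f b * g b - f a * g a) in Hprod. lra.
Qed.

Definition pw (p v : R) : R := if Rlt_dec 0 v then Rpower v p else 0.

Lemma pw_nonpos p v : v <= 0 -> pw p v = 0.
Proof. intros H; unfold pw; destruct (Rlt_dec 0 v); [lra | auto]. Qed.

Lemma pw_pos p v : 0 < v -> pw p v = Rpower v p.
Proof. intros H; unfold pw; destruct (Rlt_dec 0 v); [auto | lra]. Qed.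

Lemma Rpower_pos x y : 0 < Rpower x y.
Proof. unfold Rpower; apply exp_pos. Qed.

Lemma pw_ge0 p v : 0 <= pw p v.
Proof. unfold pw; destruct (Rlt_dec 0 v); [left; apply Rpower_pos | lra]. Qed.

Lemma pw_1 p : pw p 1 = 1.
Proof.
  rewrite pw_pos by lra. unfold Rpower. rewrite ln_1, Rmult_0_r. apply exp_0.
Qed.

Lemma pw_lt_mono p u v : 0 < p -> 0 <= u < v -> pw p u < pw p v.
Proof.
  intros Hp [[Hu | <-] Huv]; rewrite (pw_pos p v) by lra.
  - rewrite pw_pos by lra. apply Rlt_Rpower_l; lra.
  - rewrite pw_nonpos by lra; apply Rpower_pos.
Qed.

Lemma pw_le_mono p u v : 0 < p -> u <= v -> pw p u <= pw p v.
Proof.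
  intros Hp Huv. destruct (Rle_dec u 0).
  - rewrite pw_nonpos by lra; apply pw_ge0.
  - destruct Huv as [H | <-]; [left; apply pw_lt_mono; lra | lra].
Qed.

Lemma pw_le1 p v : 0 < p -> v <= 1 -> pw p v <= 1.
Proof. intros. rewrite <- (pw_1 p). apply pw_le_mono; auto. Qed.

Lemma pw_inv p w : 0 < p -> 0 <= w -> pw p (pw (/p) w) = w.
Proof.
  intros Hp [Hw | <-].
  - rewrite (pw_pos (/p)), pw_pos by (auto; apply Rpower_pos).
    rewrite Rpower_mult. replace (/p * p) with 1 by (field; lra).
    apply Rpower_1; auto.
  - rewrite (pw_nonpos (/p)) by lra. apply pw_nonpos; lra.
Qed.

Lemma pw_inv' p w : 0 < p -> 0 <= w -> pw (/p) (pw p w) = w.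
Proof.
  intros Hp Hw. rewrite <- (Rinv_inv p) at 2.
  apply pw_inv; auto. apply Rinv_0_lt_compat; auto.
Qed.

Lemma pw_locally_pos p v : 0 < v -> locally v (fun y => Rpower y p = pw p y).
Proof.
  intros Hv. apply (filter_imp (fun y => 0 < y)).
  - intros y Hy. rewrite pw_pos; auto.
  - apply open_gt; auto.
Qed.

Lemma pw_locally_neg p v : v < 0 -> locally v (fun y => 0 = pw p y).
Proof.
  intros Hv. apply (filter_imp (fun y => y < 0)).
  - intros y Hy. rewrite pw_nonpos; lra.
  - apply open_lt; auto.
Qed.

Lemma continuous_pw_0 p : 0 < p -> continuous (pw p) 0.
Proof.
  intros Hp. apply continuity_pt_filterlim.
  intros eps Heps. exists (Rpower eps (/p)). split; [apply Rpower_pos|].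
  intros x [_ Hx]. simpl in *. unfold R_dist in *.
  rewrite (pw_nonpos p 0), Rminus_0_r in * by lra.
  destruct (Rle_dec x 0).
  - rewrite pw_nonpos, Rabs_R0 by auto. auto.
  - rewrite pw_pos, Rabs_pos_eq by (try left; (lra || apply Rpower_pos)).
    rewrite Rabs_pos_eq in Hx by lra.
    replace eps with (Rpower (Rpower eps (/p)) p).
    + apply Rlt_Rpower_l; lra.
    + rewrite Rpower_mult. replace (/p * p) with 1 by (field; lra).
      apply Rpower_1; auto.
Qed.

Lemma continuous_pw p v : 0 < p -> continuous (pw p) v.
Proof.
  intros Hp. destruct (Rtotal_order v 0) as [H | [-> | H]].
  - apply (continuous_ext_loc (pw p) (fun _ => 0)). apply pw_locally_neg; auto.
    apply continuous_const.
  - apply continuous_pw_0; auto.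
  - apply (continuous_ext_loc (pw p) (fun y => Rpower y p)). apply pw_locally_pos; auto.
    apply continuity_pt_filterlim, derivable_continuous_pt.
    exists (p * Rpower v (p - 1)). apply derivable_pt_lim_power; auto.
Qed.

Lemma is_derive_pw_0 p : 1 < p -> is_derive (pw p) 0 0.
Proof.
  intros Hp. apply is_derive_Reals. intros eps Heps.
  exists (mkposreal _ (Rpower_pos eps (/(p - 1)))). intros x Hx0 Hx. simpl in Hx.
  rewrite Rplus_0_l, (pw_nonpos p 0), Rminus_0_r by lra.
  destruct (Rle_dec x 0).
  - rewrite pw_nonpos by auto.
    replace ((0 - 0) / x) with 0 by (field; lra). rewrite Rabs_R0; auto.
  - rewrite pw_pos, Rminus_0_r by lra. rewrite Rabs_pos_eq in Hx by lra.
    replace p with (1 + (p - 1)) at 1 by ring.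
    rewrite Rpower_plus, Rpower_1 by lra.
    replace (x * Rpower x (p - 1) / x) with (Rpower x (p - 1)) by (field; lra).
    rewrite Rabs_pos_eq by (left; apply Rpower_pos).
    replace eps with (Rpower (Rpower eps (/(p - 1))) (p - 1)).
    + apply Rlt_Rpower_l; lra.
    + rewrite Rpower_mult. replace (/(p - 1) * (p - 1)) with 1 by (field; lra).
      apply Rpower_1; auto.
Qed.

Lemma is_derive_pw p v : 1 < p -> is_derive (pw p) v (p * pw (p - 1) v).
Proof.
  intros Hp. destruct (Rtotal_order v 0) as [H | [-> | H]].
  - rewrite pw_nonpos, Rmult_0_r by lra.
    apply (is_derive_ext_loc (fun _ => 0)). apply pw_locally_neg; auto.
    apply is_derive_Reals, derivable_pt_lim_const.
  - rewrite pw_nonpos, Rmult_0_r by lra. apply is_derive_pw_0; auto.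
  - rewrite pw_pos by auto.
    apply (is_derive_ext_loc (fun y => Rpower y p)). apply pw_locally_pos; auto.
    apply is_derive_Reals, derivable_pt_lim_power; auto.
Qed.

Lemma pw_mvt p a b : 0 < p -> 0 <= a <= b ->
  exists c, a <= c <= b /\ pw p b - pw p a = p * Rpower c (p - 1) * (b - a).
Proof.
  intros Hp Hab. destruct (Req_dec a b) as [<- | E].
  - exists a. split; [lra | ring].
  - destruct (MVT_gen (pw p) a b (fun c => p * Rpower c (p - 1))) as [c [Hc Heq]].
    + intros x Hx. rewrite Rmin_left, Rmax_right in Hx by lra.
      apply (is_derive_ext_loc (fun y => Rpower y p)). apply pw_locally_pos; lra.
      apply is_derive_Reals, derivable_pt_lim_power; lra.
    + intros x _. apply continuity_pt_filterlim, continuous_pw; auto.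
    + rewrite Rmin_left, Rmax_right in Hc by lra. exists c; split; auto.
Qed.

Lemma Rpower_antitone a c e : 0 < a <= c -> e <= 0 -> Rpower c e <= Rpower a e.
Proof.
  intros Hc He. unfold Rpower.
  assert (ln a <= ln c) by (apply ln_le; lra).
  destruct (Req_dec (e * ln c) (e * ln a)) as [-> | Hne]; [lra|].
  left; apply exp_increasing. nra.
Qed.

(* [c^e >= 1] for [c] in [[0, 1]] and [e <= 0] (with [ln c = 0] for [c <= 0]). *)
Lemma Rpower_ge1 c e : 0 <= c <= 1 -> e <= 0 -> 1 <= Rpower c e.
Proof.
  intros Hc He. unfold Rpower. rewrite <- exp_0.
  assert (Hln : ln c <= 0).
  { destruct (Rle_lt_dec c 0).
    - unfold ln. destruct (Rlt_dec 0 c); [exfalso; lra | lra].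
    - rewrite <- ln_1. apply ln_le; lra. }
  destruct (Req_dec (e * ln c) 0) as [-> | Hne]; [lra|].
  left; apply exp_increasing. nra.
Qed.

Lemma pw_concave_slope p a b : 0 < p < 1 -> 0 <= a <= b -> b <= 1 ->
  p * (b - a) <= pw p b - pw p a.
Proof.
  intros Hp Hab Hb. destruct (pw_mvt p a b) as [c [Hc ->]]; try lra.
  assert (1 <= Rpower c (p - 1)) by (apply Rpower_ge1; lra).
  assert (0 <= p * (b - a)) by nra. nra.
Qed.

Lemma pw_concave_lipschitz p a0 a b : 0 < p < 1 -> 0 < a0 <= a -> a <= b ->
  pw p b - pw p a <= p * Rpower a0 (p - 1) * (b - a).
Proof.
  intros Hp Hab Hb. destruct (pw_mvt p a b) as [c [Hc ->]]; try lra.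
  assert (Rpower c (p - 1) <= Rpower a0 (p - 1)) by (apply Rpower_antitone; lra).
  assert (0 <= p * (b - a)) by nra. nra.
Qed.

Lemma pw_convex_slope p w0 w e : 1 < p -> 0 < w0 <= w -> 0 <= e ->
  p * Rpower w0 (p - 1) * e <= pw p (w + e) - pw p w.
Proof.
  intros Hp Hw He. destruct (pw_mvt p w (w + e)) as [c [Hc Heq]]; try lra.
  replace (w + e - w) with e in Heq by ring. rewrite Heq.
  assert (Rpower w0 (p - 1) <= Rpower c (p - 1)) by (apply Rle_Rpower_l; lra).
  assert (0 <= p * e) by nra. nra.
Qed.

(** The profile [psi = psi kappa delta] and its inverse on [[0, delta]]. *)

Section Profile.
Variables k d : R.
Hypothesis Hk : 0 < k.
Hypothesis Hk1 : k < 1.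
Hypothesis Hd : 0 < d.

Lemma div_le_1 y : y <= d -> y / d <= 1.
Proof.
  intros H. apply Rmult_le_reg_r with d; auto.
  unfold Rdiv. rewrite Rmult_assoc, Rinv_l; lra.
Qed.

Definition clamp x := Rmax 0 (Rmin x d) / d.

Lemma psi_pw_clamp x : psi k d x = pw k (clamp x).
Proof.
  unfold psi, clamp. destruct (Rlt_dec 0 x); [destruct (Rlt_dec x d)|].
  - replace (Rmax 0 (Rmin x d)) with x by (destruct_minmax; lra).
    rewrite pw_pos; auto. apply Rdiv_lt_0_compat; lra.
  - replace (Rmax 0 (Rmin x d)) with d by (destruct_minmax; lra).
    replace (d / d) with 1 by (field; lra).
    rewrite pw_1; auto.
  - replace (Rmax 0 (Rmin x d)) with 0 by (destruct_minmax; lra).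
    rewrite pw_nonpos; auto. unfold Rdiv; lra.
Qed.

Lemma clamp_range x : 0 <= clamp x <= 1.
Proof.
  unfold clamp. split.
  - apply Rdiv_le_0_compat; destruct_minmax; lra.
  - apply div_le_1. destruct_minmax; lra.
Qed.

Lemma clamp_inner x : 0 <= x <= d -> clamp x = x / d.
Proof. intros H. unfold clamp. f_equal. destruct_minmax; lra. Qed.

Lemma clamp_increment x y : x <= y -> 0 <= clamp y - clamp x <= (y - x) / d.
Proof.
  intros H. unfold clamp.
  replace (Rmax 0 (Rmin y d) / d - Rmax 0 (Rmin x d) / d)
    with ((Rmax 0 (Rmin y d) - Rmax 0 (Rmin x d)) / d) by (field; lra).
  split; [apply Rdiv_le_0_compat|]; unfold Rdiv;
    try apply Rmult_le_compat_r; try (left; apply Rinv_0_lt_compat); destruct_minmax; lra.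
Qed.

Lemma clamp_lipschitz x y : Rabs (clamp x - clamp y) <= Rabs (x - y) / d.
Proof.
  destruct (Rle_dec x y) as [Hxy | Hxy].
  - rewrite Rabs_left1, (Rabs_left1 (x - y)) by (try assert (H := clamp_increment x y Hxy); lra).
    replace (- (x - y)) with (y - x) by ring.
    assert (H := clamp_increment x y Hxy). lra.
  - rewrite Rabs_pos_eq, (Rabs_pos_eq (x - y))
      by (try assert (H := clamp_increment y x ltac:(lra)); lra).
    apply clamp_increment; lra.
Qed.

Lemma psi_ge0 x : 0 <= psi k d x.
Proof. rewrite psi_pw_clamp. apply pw_ge0. Qed.

Lemma psi_le1 x : psi k d x <= 1.
Proof. rewrite psi_pw_clamp. apply pw_le1; auto. apply clamp_range. Qed.

Lemma psi_mono x y : x <= y -> psi k d x <= psi k d y.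
Proof.
  intros H. rewrite !psi_pw_clamp. apply pw_le_mono; auto.
  assert (Hc := clamp_increment x y H). lra.
Qed.

Lemma psi_nonpos x : x <= 0 -> psi k d x = 0.
Proof. intros H. unfold psi. destruct (Rlt_dec 0 x); [lra | auto]. Qed.

Lemma psi_ge_delta x : d <= x -> psi k d x = 1.
Proof.
  intros H. unfold psi. destruct (Rlt_dec 0 x); [|lra].
  destruct (Rlt_dec x d); [lra | auto].
Qed.

Lemma continuous_clamp x : continuous clamp x.
Proof.
  apply continuity_pt_filterlim. intros eps Heps.
  exists (eps * d). split; [apply Rmult_lt_0_compat; auto|].
  intros y [_ Hy]. simpl in *. unfold R_dist in *.
  eapply Rle_lt_trans; [apply clamp_lipschitz|].
  apply Rmult_lt_reg_r with d; auto. unfold Rdiv. rewrite Rmult_assoc, Rinv_l; lra.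
Qed.

Lemma continuous_psi x : continuous (psi k d) x.
Proof.
  apply (continuous_ext (fun x => pw k (clamp x))).
  - intros; rewrite psi_pw_clamp; auto.
  - apply continuous_comp; [apply continuous_clamp | apply continuous_pw; auto].
Qed.

(* [psi] is uniformly continuous (Heine on the compact range of [clamp]). *)
Lemma psi_uniformly_continuous eps : 0 < eps -> exists eta, 0 < eta /\
  forall x y, Rabs (x - y) < eta -> Rabs (psi k d x - psi k d y) < eps.
Proof.
  intros He.
  assert (Hc : forall x, 0 <= x <= 1 -> continuity_pt (pw k) x)
    by (intros; apply continuity_pt_filterlim, continuous_pw; auto).
  destruct (Heine (pw k) (fun c => 0 <= c <= 1) (compact_P3 0 1) Hc (mkposreal _ He))
    as [eta Heta].
  exists (eta * d). split; [apply Rmult_lt_0_compat; auto; apply cond_pos|].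
  intros x y Hxy. rewrite !psi_pw_clamp. apply Heta; try apply clamp_range.
  eapply Rle_lt_trans; [apply clamp_lipschitz|].
  apply Rmult_lt_reg_r with d; auto. unfold Rdiv. rewrite Rmult_assoc, Rinv_l; lra.
Qed.

Lemma psi_slope_lower x y : 0 <= x -> x <= y -> y <= d ->
  k / d * (y - x) <= psi k d y - psi k d x.
Proof.
  intros H1 H2 H3. rewrite !psi_pw_clamp, !clamp_inner by lra.
  replace (k / d * (y - x)) with (k * (y / d - x / d)) by (field; lra).
  apply pw_concave_slope; try lra; try (apply div_le_1; lra).
  split; [apply Rdiv_le_0_compat; lra|].
  unfold Rdiv; apply Rmult_le_compat_r; [left; apply Rinv_0_lt_compat|]; lra.
Qed.

Definition psi_lip a0 := k * Rpower (Rmin a0 d / d) (k - 1) / d.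

Lemma psi_slope_upper a0 x y : 0 < a0 -> a0 <= x -> x <= y ->
  psi k d y - psi k d x <= psi_lip a0 * (y - x).
Proof.
  intros H0 H1 H2. rewrite !psi_pw_clamp.
  assert (Ha : 0 < Rmin a0 d / d) by (apply Rdiv_lt_0_compat; destruct_minmax; lra).
  assert (Hax : Rmin a0 d / d <= clamp x).
  { unfold clamp, Rdiv. apply Rmult_le_compat_r.
    left; apply Rinv_0_lt_compat; auto. destruct_minmax; lra. }
  assert (Hc := clamp_increment x y H2).
  eapply Rle_trans; [apply (pw_concave_lipschitz k (Rmin a0 d / d)); lra|].
  assert (0 < k * Rpower (Rmin a0 d / d) (k - 1))
    by (apply Rmult_lt_0_compat; auto; apply Rpower_pos).
  unfold psi_lip.
  replace (k * Rpower (Rmin a0 d / d) (k - 1) / d * (y - x)) with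
    (k * Rpower (Rmin a0 d / d) (k - 1) * ((y - x) / d)) by (field; lra).
  apply Rmult_le_compat_l; lra.
Qed.

Definition q w := pw (/k) w.

(* [1/k > 1]: [q] is convex and differentiable. *)
Lemma invk_gt1 : 1 < / k.
Proof. rewrite <- Rinv_1. apply Rinv_lt_contravar; lra. Qed.

Lemma q_range w : 0 <= w <= 1 -> 0 <= q w <= 1.
Proof.
  intros H. unfold q. split; [apply pw_ge0|].
  apply pw_le1; [apply Rinv_0_lt_compat; auto | lra].
Qed.

Lemma psi_q w : 0 <= w <= 1 -> psi k d (d * q w) = w.
Proof.
  intros H. assert (H' := q_range w H).
  rewrite psi_pw_clamp, clamp_inner by nra.
  replace (d * q w / d) with (q w) by (field; lra).
  apply pw_inv; auto; lra.
Qed.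

Lemma q_mono u v : u <= v -> q u <= q v.
Proof. intros; unfold q; apply pw_le_mono; auto. apply Rinv_0_lt_compat; auto. Qed.

Lemma q_0 : q 0 = 0.
Proof. unfold q; apply pw_nonpos; lra. Qed.

Lemma q_1 : q 1 = 1.
Proof. unfold q; apply pw_1. Qed.

Definition dq w := / k * pw (/k - 1) w.

Lemma is_derive_q w : is_derive q w (dq w).
Proof. apply is_derive_pw, invk_gt1. Qed.

Lemma continuous_q w : continuous q w.
Proof. apply continuous_pw, Rinv_0_lt_compat; auto. Qed.

Lemma continuous_dq w : continuous dq w.
Proof.
  unfold dq. apply continuity_pt_filterlim. apply continuity_pt_mult.
  - continuity_const.
  - apply continuity_pt_filterlim, continuous_pw. assert (H := invk_gt1); lra.
Qed.

Lemma q_level a : 0 <= a -> d * q (pw k (a / d)) = a.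
Proof.
  intros Ha. unfold q. rewrite pw_inv' by (auto; apply Rdiv_le_0_compat; lra).
  field; lra.
Qed.

Lemma dq_le_level a w : 0 <= a -> w <= pw k (a / d) -> d * q w <= a.
Proof.
  intros Ha Hw. rewrite <- (q_level a Ha).
  apply Rmult_le_compat_l; [lra | apply q_mono; auto].
Qed.

Lemma dq_ge_level a w : 0 <= a -> pw k (a / d) <= w -> a <= d * q w.
Proof.
  intros Ha Hw. rewrite <- (q_level a Ha).
  apply Rmult_le_compat_l; [lra | apply q_mono; auto].
Qed.

Definition q_slope a := / k * Rpower (pw k (a / d)) (/ k - 1).

Lemma q_slope_pos a : 0 < q_slope a.
Proof. apply Rmult_lt_0_compat; [apply Rinv_0_lt_compat; auto | apply Rpower_pos]. Qed.

Lemma q_convex_slope a w e : 0 < a -> pw k (a / d) <= w -> 0 <= e ->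
  q_slope a * e <= q (w + e) - q w.
Proof.
  intros Ha Hw He. apply pw_convex_slope; auto; [apply invk_gt1|].
  rewrite pw_pos by (apply Rdiv_lt_0_compat; lra). split; [apply Rpower_pos|].
  rewrite <- pw_pos by (apply Rdiv_lt_0_compat; lra). auto.
Qed.

(** After the
    substitution [t = theta + d q(w)], which straightens the rising part of
    [lam theta], the derivative of the divergence is an affine function of
    [G (theta - theta0)]. *)

Section Kernel.
Variables S l0 : R.
Hypothesis HS : 0 < S.
Hypothesis Hl0 : 0 < l0.

Lemma weight_pos w : 0 <= w -> 0 < S * w + l0.
Proof. intros; nra. Qed.

Definition Gi s w := psi k d (s + d * q w) / (S * w + l0).
Definition G s := RInt (Gi s) 0 1.
Definition c0 := RInt (fun w => 1 / (S * w + l0)) 0 1.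

Lemma continuous_psi_q s w : continuous (fun w => psi k d (s + d * q w)) w.
Proof.
  apply (continuous_comp (fun w => s + d * q w) (psi k d)); [|apply continuous_psi].
  apply continuity_pt_filterlim, continuity_pt_plus; [continuity_const|].
  apply continuity_pt_mult; [continuity_const|].
  apply continuity_pt_filterlim, continuous_q.
Qed.

Lemma continuous_inv_weight (f : R -> R) w : 0 <= w -> continuous f w ->
  continuous (fun w => f w / (S * w + l0)) w.
Proof.
  intros Hw Hf. apply continuity_pt_filterlim, continuity_pt_div.
  - apply continuity_pt_filterlim, Hf.
  - apply continuity_pt_plus; [apply continuity_pt_mult|];
      [continuity_const | apply continuity_pt_id | continuity_const].
  - apply Rgt_not_eq, weight_pos; auto.
Qed.

Lemma ex_RInt_Gi s a b : 0 <= a -> 0 <= b -> ex_RInt (Gi s) a b.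
Proof.
  intros Ha Hb. apply ex_RInt_of_continuous. intros z Hz.
  apply continuous_inv_weight; [destruct_minmax; lra | apply continuous_psi_q].
Qed.

Lemma ex_RInt_c0 : ex_RInt (fun w => 1 / (S * w + l0)) 0 1.
Proof.
  apply ex_RInt_of_continuous. intros z Hz.
  apply continuous_inv_weight; [destruct_minmax; lra | apply continuous_const].
Qed.

Lemma c0_val : c0 = ln (1 + S / l0) / S.
Proof.
  unfold c0. apply is_RInt_unique.
  replace (ln (1 + S / l0) / S) with (minus (ln (S * 1 + l0) / S) (ln (S * 0 + l0) / S)).
  - apply (is_RInt_derive (fun w => ln (S * w + l0) / S)).
    + intros x Hx. rewrite Rmin_left, Rmax_right in Hx by lra.
      auto_derive; [nra | field; split; nra].
    + intros x Hx. rewrite Rmin_left, Rmax_right in Hx by lra.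
      apply continuous_inv_weight; [lra | apply continuous_const].
  - unfold minus, plus, opp; simpl.
    replace (S * 1 + l0) with ((1 + S / l0) * l0) by (field; lra).
    rewrite Rmult_0_r, Rplus_0_l, ln_mult by
      (try apply Rplus_lt_0_compat; try apply Rdiv_lt_0_compat; lra).
    field; lra.
Qed.

Lemma c0_pos : 0 < c0.
Proof.
  rewrite c0_val. apply Rdiv_lt_0_compat; auto. rewrite <- ln_1.
  assert (0 < S / l0) by (apply Rdiv_lt_0_compat; auto).
  apply ln_increasing; lra.
Qed.

Lemma ln_1_plus_lt x : 0 < x -> ln (1 + x) < x.
Proof.
  intros Hx. rewrite <- (ln_exp x) at 2. apply ln_increasing; [lra|].
  apply exp_ineq1; lra.
Qed.

(* The hypothesis on [h]: the true peak [S + h] is positive, and the level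
   [1] is crossed by [F] before its maximum [(S + h + l0) c0]. *)
Lemma h_condition h : h > S / ln (1 + S / l0) - S - l0 ->
  0 < S + h /\ 1 < (S + h + l0) * c0.
Proof.
  intros Hh. rewrite c0_val. set (L := ln (1 + S / l0)) in *.
  assert (Hx : 0 < S / l0) by (apply Rdiv_lt_0_compat; auto).
  assert (HL : 0 < L) by (unfold L; rewrite <- ln_1; apply ln_increasing; lra).
  assert (HLx : L < S / l0) by (apply ln_1_plus_lt; auto).
  assert (HSL : l0 < S / L).
  { assert (l0 * L < S)
      by (replace S with (l0 * (S / l0)) by (field; lra); apply Rmult_lt_compat_l; lra).
    apply (Rmult_lt_reg_r L); auto. replace (S / L * L) with S by (field; lra). lra. }
  split; [lra|].
  replace ((S + h + l0) * (L / S)) with ((S + h + l0) * / (S / L)) by (field; lra).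
  replace 1 with ((S / L) * / (S / L)) by (field; lra).
  apply Rmult_lt_compat_r; [apply Rinv_0_lt_compat, Rdiv_lt_0_compat|]; lra.
Qed.

(* The normalisation identity behind [F theta0 = 1 + h G 0]. *)
Lemma G0_identity : S * G 0 + l0 * c0 = 1.
Proof.
  unfold G, c0.
  rewrite <- (RInt_scal_R (Gi 0)), <- (RInt_scal_R (fun w => 1 / (S * w + l0)))
    by (apply ex_RInt_c0 || (apply ex_RInt_Gi; lra)).
  rewrite <- RInt_plus_R by (apply ex_RInt_scal_R; (apply ex_RInt_c0 || (apply ex_RInt_Gi; lra))).
  rewrite (RInt_ext_R _ (fun _ => 1)).
  - rewrite RInt_const_R. ring.
  - intros x Hx. rewrite Rmin_left, Rmax_right in Hx by lra.
    unfold Gi. rewrite Rplus_0_l, psi_q by lra. field. nra.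
Qed.

Definition psi_inc s1 s2 w := psi k d (s2 + d * q w) - psi k d (s1 + d * q w).

Lemma G_increment s1 s2 : G s2 - G s1 = RInt (fun w => Gi s2 w - Gi s1 w) 0 1.
Proof. unfold G. symmetry. apply RInt_minus_R; apply ex_RInt_Gi; lra. Qed.

Lemma Gi_increment_bounds s1 s2 w : s1 <= s2 -> 0 <= w <= 1 ->
  0 <= psi_inc s1 s2 w /\
  psi_inc s1 s2 w / (S + l0) <= Gi s2 w - Gi s1 w <= psi_inc s1 s2 w / l0.
Proof.
  intros Hs Hw. unfold Gi, psi_inc.
  assert (Hinc : 0 <= psi k d (s2 + d * q w) - psi k d (s1 + d * q w))
    by (assert (H := psi_mono (s1 + d * q w) (s2 + d * q w) ltac:(lra)); lra).
  assert (Hwt := weight_pos w ltac:(lra)).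
  replace (psi k d (s2 + d * q w) / (S * w + l0) - psi k d (s1 + d * q w) / (S * w + l0))
    with ((psi k d (s2 + d * q w) - psi k d (s1 + d * q w)) / (S * w + l0)) by (field; lra).
  split; [auto|]. unfold Rdiv. split; apply Rmult_le_compat_l; auto;
    apply Rinv_le_contravar; nra.
Qed.

Lemma G_mono s1 s2 : s1 <= s2 -> G s1 <= G s2.
Proof.
  intros H. apply Rminus_le_0. rewrite G_increment.
  apply RInt_ge_0; [lra | apply ex_RInt_minus_R; apply ex_RInt_Gi; lra|].
  intros x Hx. destruct (Gi_increment_bounds s1 s2 x H ltac:(lra)) as [H0 [H1 _]].
  assert (0 <= psi_inc s1 s2 x / (S + l0)) by (apply Rdiv_le_0_compat; lra). lra.
Qed.

Lemma G_low s : s <= - d -> G s = 0.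
Proof.
  intros H. unfold G. rewrite (RInt_ext_R _ (fun _ => 0)).
  - rewrite RInt_const_R. eq_in_R. ring.
  - intros x Hx. rewrite Rmin_left, Rmax_right in Hx by lra. unfold Gi.
    assert (Hq := q_range x ltac:(lra)).
    rewrite psi_nonpos by nra. unfold Rdiv; ring.
Qed.

Lemma G_high s : d <= s -> G s = c0.
Proof.
  intros H. unfold G, c0. apply RInt_ext_R.
  intros x Hx. rewrite Rmin_left, Rmax_right in Hx by lra. unfold Gi.
  assert (Hq := q_range x ltac:(lra)).
  rewrite psi_ge_delta by nra. auto.
Qed.

Lemma G_range s : 0 <= G s <= c0.
Proof.
  rewrite <- (G_low (- d - Rabs s)), <- (G_high (d + Rabs s))
    by (assert (H := Rabs_pos s); lra).
  assert (H1 := Rle_abs s). assert (H2 := Rle_abs (- s)). rewrite Rabs_Ropp in H2.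
  split; apply G_mono; lra.
Qed.

Lemma G_slope_lower A B s1 s2 :
  0 <= A -> A < B -> B <= d -> s1 <= s2 -> 0 <= s1 + A -> s2 + B <= d ->
  (pw k (B / d) - pw k (A / d)) * (k / d * (s2 - s1) / (S + l0)) <= G s2 - G s1.
Proof.
  intros HA HAB HB Hs H1 H2. rewrite G_increment.
  assert (HAd : 0 <= A / d) by (apply Rdiv_le_0_compat; lra).
  assert (HBd : A / d < B / d)
    by (unfold Rdiv; apply Rmult_lt_compat_r; [apply Rinv_0_lt_compat|]; lra).
  assert (Hw : pw k (A / d) < pw k (B / d)) by (apply pw_lt_mono; lra).
  assert (HB1 : pw k (B / d) <= 1) by (apply pw_le1; [|apply div_le_1]; lra).
  assert (HA0 := pw_ge0 k (A / d)).
  rewrite Rmult_comm. apply RInt_lower_on_subinterval; try lra.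
  - intros x Hx. apply (continuous_minus (Gi s2) (Gi s1));
      apply continuous_inv_weight; (lra || apply continuous_psi_q).
  - intros x Hx. destruct (Gi_increment_bounds s1 s2 x Hs ltac:(lra)) as [H0 [H3 _]].
    assert (0 <= psi_inc s1 s2 x / (S + l0)) by (apply Rdiv_le_0_compat; lra). lra.
  - intros x Hx. destruct (Gi_increment_bounds s1 s2 x Hs ltac:(lra)) as [_ [H3 _]].
    assert (Hq1 := dq_ge_level A x HA ltac:(lra)).
    assert (Hq2 := dq_le_level B x ltac:(lra) ltac:(lra)).
    assert (Hsl := psi_slope_lower (s1 + d * q x) (s2 + d * q x)
                     ltac:(lra) ltac:(lra) ltac:(lra)).
    replace (s2 + d * q x - (s1 + d * q x)) with (s2 - s1) in Hsl by ring.
    fold (psi_inc s1 s2 x) in Hsl.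
    eapply Rle_trans; [|exact H3]. unfold Rdiv.
    apply Rmult_le_compat_r; [left; apply Rinv_0_lt_compat|]; lra.
Qed.

Lemma G_locally_steep sh : Rabs sh < d ->
  exists eta c, 0 < eta /\ 0 < c /\
    forall s1 s2, sh - eta <= s1 -> s1 <= s2 -> s2 <= sh + eta ->
      c * (s2 - s1) <= G s2 - G s1.
Proof.
  intros Hsh. set (eta := (d - Rabs sh) / 4).
  set (A := Rmax 0 (eta - sh)). set (B := Rmin d (d - sh - eta)).
  assert (Hs1 := Rle_abs sh). assert (Hs2 := Rle_abs (- sh)). rewrite Rabs_Ropp in Hs2.
  assert (HA : 0 <= A) by (unfold A; destruct_minmax; lra).
  assert (HAB : A < B) by (unfold A, B, eta in *; destruct_minmax; lra).
  assert (HB : B <= d) by (unfold B; destruct_minmax; lra).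
  assert (Hw : pw k (A / d) < pw k (B / d)).
  { apply pw_lt_mono; auto. split; [apply Rdiv_le_0_compat; lra|].
    unfold Rdiv; apply Rmult_lt_compat_r; [apply Rinv_0_lt_compat|]; lra. }
  exists eta, ((pw k (B / d) - pw k (A / d)) * (k / d) / (S + l0)). split; [|split].
  - unfold eta; lra.
  - apply Rdiv_lt_0_compat; [apply Rmult_lt_0_compat; [|apply Rdiv_lt_0_compat]|]; lra.
  - intros s1 s2 H1 H2 H3.
    replace ((pw k (B / d) - pw k (A / d)) * (k / d) / (S + l0) * (s2 - s1)) with
      ((pw k (B / d) - pw k (A / d)) * (k / d * (s2 - s1) / (S + l0))) by (field; lra).
    apply G_slope_lower; auto; [unfold A | unfold B]; destruct_minmax; lra.
Qed.

(* [G 0 > 0]: hence [F th0 - 1 = h G 0] has the sign of [h]. *)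
Lemma G0_pos : 0 < G 0.
Proof.
  destruct (G_locally_steep 0 ltac:(rewrite Rabs_R0; lra)) as [eta [c [Heta [Hc Hsl]]]].
  assert (H := Hsl (0 - eta) 0 ltac:(lra) ltac:(lra) ltac:(lra)).
  assert (H0 := G_range (0 - eta)). nra.
Qed.

(* To the right of [0], [G] is Lipschitz (the slope of [psi] is bounded
   beyond [a > 0]). *)
Lemma G_lipschitz_right a s1 s2 : 0 < a -> a <= s1 -> s1 <= s2 ->
  G s2 - G s1 <= psi_lip a / l0 * (s2 - s1).
Proof.
  intros Ha H1 H2. rewrite G_increment.
  assert (RInt (fun w => Gi s2 w - Gi s1 w) 0 1 <= RInt (fun _ => psi_lip a / l0 * (s2 - s1)) 0 1).
  { apply RInt_le; [lra | apply ex_RInt_minus_R; apply ex_RInt_Gi; lra | apply ex_RInt_const|].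
    intros x Hx. destruct (Gi_increment_bounds s1 s2 x H2 ltac:(lra)) as [H0 [_ H3]].
    assert (Hq := q_range x ltac:(lra)).
    assert (Hl := psi_slope_upper a (s1 + d * q x) (s2 + d * q x) Ha ltac:(nra) ltac:(lra)).
    replace (s2 + d * q x - (s1 + d * q x)) with (s2 - s1) in Hl by ring.
    fold (psi_inc s1 s2 x) in Hl.
    eapply Rle_trans; [exact H3|]. replace (psi_lip a / l0 * (s2 - s1))
      with (psi_lip a * (s2 - s1) / l0) by (field; lra).
    unfold Rdiv; apply Rmult_le_compat_r; [left; apply Rinv_0_lt_compat|]; lra. }
  rewrite RInt_const_R in H. lra.
Qed.

(* To the left of [-a < 0], raising [s1] to [s2] is dominated by translating
   the variable [w] by [(s2 - s1) / (d q_slope a)], thanks to the convexity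
   of [q]. *)
Lemma psi_q_translate a s1 s2 x : 0 < a < d -> s1 <= s2 -> s2 <= - a -> 0 <= x ->
  psi k d (s2 + d * q x) <= psi k d (s1 + d * q (x + (s2 - s1) / (d * q_slope a))).
Proof.
  intros Ha Hs Hs2 Hx. assert (HQ := q_slope_pos a).
  set (e := (s2 - s1) / (d * q_slope a)).
  assert (He : 0 <= e) by (apply Rdiv_le_0_compat; [lra | apply Rmult_lt_0_compat; lra]).
  destruct (Rle_dec x (pw k (a / d))) as [Hlow | Hhigh].
  - rewrite psi_nonpos; [apply psi_ge0|].
    assert (H := dq_le_level a x ltac:(lra) Hlow). lra.
  - apply psi_mono.
    assert (Hcv := q_convex_slope a x e ltac:(lra) ltac:(lra) He).
    assert (Hde : d * q_slope a * e = s2 - s1) by (unfold e; field; lra).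
    nra.
Qed.

Lemma G_lipschitz_left a s1 s2 : 0 < a < d -> s1 <= s2 -> s2 <= - a ->
  G s2 - G s1 <= / (d * q_slope a * l0) * (s2 - s1).
Proof.
  intros Ha H1 H2. rewrite G_increment. assert (HQ := q_slope_pos a).
  set (e := (s2 - s1) / (d * q_slope a)).
  assert (He : 0 <= e) by (apply Rdiv_le_0_compat; [lra | apply Rmult_lt_0_compat; lra]).
  set (phi := fun w => psi k d (s1 + d * q w)).
  assert (Ephi : ex_RInt (fun w => phi (w + e) - phi w) 0 1).
  { apply ex_RInt_of_continuous. intros z _. apply (continuous_minus (fun w => phi (w + e)) phi);
      [apply (continuous_comp (fun w => w + e) phi)|]; try apply continuous_psi_q.
    apply continuity_pt_filterlim, continuity_pt_plus; [apply continuity_pt_id | continuity_const]. }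
  assert (RInt (fun w => Gi s2 w - Gi s1 w) 0 1 <= RInt (fun w => / l0 * (phi (w + e) - phi w)) 0 1).
  { apply RInt_le; [lra | apply ex_RInt_minus_R; apply ex_RInt_Gi; lra
                   | apply ex_RInt_scal_R, Ephi|].
    intros x Hx. destruct (Gi_increment_bounds s1 s2 x H1 ltac:(lra)) as [H0 [_ H3]].
    assert (Hsh := psi_q_translate a s1 s2 x Ha H1 H2 ltac:(lra)). fold e in Hsh.
    eapply Rle_trans; [exact H3|]. unfold psi_inc, phi, Rdiv. rewrite (Rmult_comm (/ l0)).
    apply Rmult_le_compat_r; [left; apply Rinv_0_lt_compat|]; lra. }
  rewrite RInt_scal_R in H by exact Ephi.
  assert (Hint := RInt_translate_increment phi e He ltac:(intros; apply continuous_psi_q)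
                    ltac:(intros; split; [apply psi_ge0 | apply psi_le1])).
  replace (/ (d * q_slope a * l0) * (s2 - s1)) with (/ l0 * e) by (unfold e; field; lra).
  assert (/ l0 * RInt (fun w => phi (w + e) - phi w) 0 1 <= / l0 * e)
    by (apply Rmult_le_compat_l; [left; apply Rinv_0_lt_compat|]; lra).
  lra.
Qed.

Lemma G_locally_lipschitz sh : Rabs sh < d -> sh <> 0 ->
  exists rho L, 0 < rho /\
    forall s, Rabs (s - sh) <= rho -> Rabs (G s - G sh) <= L * Rabs (s - sh).
Proof.
  intros Hsh Hne. apply Rabs_def2 in Hsh.
  destruct (Rlt_dec 0 sh) as [Hp | Hn].
  - exists (sh / 2), (psi_lip (sh / 2) / l0). split; [lra|].
    apply nondecreasing_lipschitz_at; [apply G_mono|].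
    intros s1 s2 H1 H2 H3. apply G_lipschitz_right; lra.
  - exists (- sh / 2), (/ (d * q_slope (- sh / 2) * l0)). split; [lra|].
    apply nondecreasing_lipschitz_at; [apply G_mono|].
    intros s1 s2 H1 H2 H3. apply G_lipschitz_left; lra.
Qed.

Lemma G_continuous : continuity G.
Proof.
  intros s eps Heps.
  destruct (psi_uniformly_continuous (eps * l0 / 2)) as [eta [Heta H]].
  { apply Rdiv_lt_0_compat; [apply Rmult_lt_0_compat|]; lra. }
  exists eta. split; auto. intros x [_ Hx]. simpl in *. unfold R_dist in *.
  rewrite G_increment.
  eapply Rle_lt_trans; [apply (abs_RInt_le_const _ 0 1 (eps / 2)); [lra| |] | lra].
  - apply ex_RInt_minus_R; apply ex_RInt_Gi; lra.
  - intros t Ht. unfold Gi. assert (Hwt := weight_pos t ltac:(lra)).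
    replace (psi k d (x + d * q t) / (S * t + l0) - psi k d (s + d * q t) / (S * t + l0))
      with ((psi k d (x + d * q t) - psi k d (s + d * q t)) * / (S * t + l0)) by (field; lra).
    rewrite Rabs_mult, (Rabs_pos_eq (/ _)) by (left; apply Rinv_0_lt_compat; lra).
    assert (H1 : Rabs (psi k d (x + d * q t) - psi k d (s + d * q t)) < eps * l0 / 2)
      by (apply H; replace (x + d * q t - (s + d * q t)) with (x - s) by ring; auto).
    assert (H2 : / (S * t + l0) <= / l0) by (apply Rinv_le_contravar; nra).
    assert (H3 : 0 < / (S * t + l0)) by (apply Rinv_0_lt_compat; lra).
    apply Rle_trans with (eps * l0 / 2 * / l0); [apply Rmult_le_compat; try lra; apply Rabs_pos|].
    right; field; lra.
Qed.

(** For [theta] in [(0, tau - d)] the integral [J theta]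
    splits at [theta] and [theta + d], where [lam theta] is constant, and the
    substitution [t = theta + d q(w)] on the rising part yields
      [J theta = C1 + S (Psi (tau - theta) - Psi (- theta)) + I0 theta]. *)

Section Divergence.
Variables h th0 tau : R.
Hypothesis Hh : 0 < S + h.

Definition la th t := lam S l0 k d th t.
Definition ls t := lam_star S h l0 k d th0 t.

Lemma la_ge th t : l0 <= la th t.
Proof. unfold la, lam. assert (H := psi_ge0 (t - th)). nra. Qed.

Lemma ls_ge t : l0 <= ls t.
Proof. unfold ls, lam_star. assert (H := psi_ge0 (t - th0)). nra. Qed.

Lemma continuous_intensity c a t : continuous (fun t => c * psi k d (t - a) + l0) t.
Proof.
  apply continuity_pt_filterlim, continuity_pt_plus; [|continuity_const].
  apply continuity_pt_mult; [continuity_const|].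
  apply (continuity_pt_comp (fun t => t - a) (psi k d)).
  - apply continuity_pt_minus; [apply continuity_pt_id | continuity_const].
  - apply continuity_pt_filterlim, continuous_psi.
Qed.

Lemma continuous_ls t : continuous ls t.
Proof. apply continuous_intensity. Qed.

Lemma continuous_la th t : continuous (la th) t.
Proof. apply continuous_intensity. Qed.

Lemma continuous_ln_comp (f : R -> R) x : continuous f x -> 0 < f x ->
  continuous (fun y => ln (f y)) x.
Proof. intros H1 H2. apply (continuous_comp f ln); auto. apply continuous_ln; auto. Qed.

Definition mK th t := ls t * ln (la th t).

Lemma continuous_mK th t : continuous (mK th) t.
Proof.
  apply (continuous_mult ls (fun t => ln (la th t))); [apply continuous_ls|].
  apply continuous_ln_comp; [apply continuous_la | assert (H := la_ge th t); lra].
Qed.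

Lemma ex_RInt_mK th a b : ex_RInt (mK th) a b.
Proof. apply ex_RInt_of_continuous; intros; apply continuous_mK. Qed.

Lemma ex_RInt_ls a b : ex_RInt ls a b.
Proof. apply ex_RInt_of_continuous; intros; apply continuous_ls. Qed.

Definition Jint th t := la th t - ls t - mK th t + ls t * ln (ls t).

Lemma J_KL_integrand th t :
  (let r := lam S l0 k d th t / lam_star S h l0 k d th0 t in
   (r - 1 - ln r) * lam_star S h l0 k d th0 t) = Jint th t.
Proof.
  unfold Jint, mK. fold (la th t) (ls t). simpl.
  assert (P1 := la_ge th t). assert (P2 := ls_ge t).
  rewrite ln_div by lra. field. lra.
Qed.

Lemma continuous_Jint th t : continuous (Jint th) t.
Proof.
  assert (Hls : 0 < ls t) by (assert (H := ls_ge t); lra).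
  apply (continuous_plus (fun t => la th t - ls t - mK th t) (fun t => ls t * ln (ls t))).
  - apply (continuous_minus (fun t => la th t - ls t) (mK th)); [|apply continuous_mK].
    apply (continuous_minus (la th) ls); [apply continuous_la | apply continuous_ls].
  - apply (continuous_mult ls (fun t => ln (ls t))); [apply continuous_ls|].
    apply continuous_ln_comp; [apply continuous_ls | auto].
Qed.

Definition Lam x := RInt ls 0 x.
Definition Psi x := RInt (psi k d) 0 x.
Definition I0 th := RInt (fun w => Lam (th + d * q w) * (S / (S * w + l0))) 0 1.
Definition C1 :=
  l0 * tau - Lam tau - ln (S + l0) * Lam tau + RInt (fun t => ls t * ln (ls t)) 0 tau.

Lemma is_derive_Lam x : is_derive Lam x (ls x).
Proof. apply is_derive_RInt_upper, continuous_ls. Qed.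

Lemma continuous_Lam x : continuous Lam x.
Proof. apply (ex_derive_continuous Lam). exists (ls x); apply is_derive_Lam. Qed.

Lemma is_derive_Psi x : is_derive Psi x (psi k d x).
Proof. apply is_derive_RInt_upper, continuous_psi. Qed.

(* Before [theta] the model intensity is [l0]. *)
Lemma RInt_mK_before th : 0 <= th -> RInt (mK th) 0 th = ln l0 * Lam th.
Proof.
  intros Hth. unfold Lam. rewrite <- RInt_scal_R by apply ex_RInt_ls.
  apply RInt_ext_R. intros x Hx. unfold mK, la, lam.
  rewrite psi_nonpos by (destruct_minmax; lra). eq_in_R.
  rewrite Rmult_0_r, Rplus_0_l. ring.
Qed.

(* After [theta + d] the model intensity is [S + l0]. *)
Lemma RInt_mK_after th : th + d <= tau ->
  RInt (mK th) (th + d) tau = ln (S + l0) * (Lam tau - Lam (th + d)).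
Proof.
  intros H. unfold Lam.
  assert (E := RInt_Chasles_R ls 0 (th + d) tau (ex_RInt_ls _ _) (ex_RInt_ls _ _)).
  replace (RInt ls 0 tau - RInt ls 0 (th + d)) with (RInt ls (th + d) tau) by lra.
  rewrite <- RInt_scal_R by apply ex_RInt_ls. apply RInt_ext_R.
  intros x Hx. unfold mK, la, lam.
  rewrite psi_ge_delta by (destruct_minmax; lra). eq_in_R.
  rewrite Rmult_1_r. ring.
Qed.

Lemma is_derive_inner th w : is_derive (fun w => th + d * q w) w (d * dq w).
Proof.
  assert (H := is_derive_plus (fun _ => th) (fun w => d * q w) w 0 (d * dq w)
                 (is_derive_const th w) (is_derive_scal q w d (dq w) (is_derive_q w))).
  replace (d * dq w) with (plus 0 (d * dq w)) by (unfold plus; simpl; ring).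
  exact H.
Qed.

Lemma continuous_inner th w : continuous (fun w => th + d * q w) w.
Proof. apply (ex_derive_continuous (fun w => th + d * q w)). eexists; apply is_derive_inner. Qed.

(* On the rising part [[theta, theta + d]] substitute [t = theta + d q(w)];
   then [la theta t = S w + l0]. *)
Lemma RInt_mK_rise_substitution th :
  RInt (mK th) th (th + d) =
  RInt (fun w => (d * dq w * ls (th + d * q w)) * ln (S * w + l0)) 0 1.
Proof.
  assert (Hc := is_RInt_comp (mK th) (fun w => th + d * q w) (fun w => d * dq w) 0 1).
  cbv beta in Hc. rewrite q_0, q_1, Rmult_0_r, Rplus_0_r, Rmult_1_r in Hc.
  rewrite <- (is_RInt_unique _ _ _ _ (Hc (fun x _ => continuous_mK th _)
             (fun x _ => conj (is_derive_inner th x)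
                          (continuous_scal_r d dq x (continuous_dq x))))).
  apply RInt_ext_R. intros x Hx. rewrite Rmin_left, Rmax_right in Hx by lra.
  change (scal (d * dq x) ?z) with ((d * dq x) * z).
  unfold mK, la, lam. replace (th + d * q x - th) with (d * q x) by ring.
  rewrite psi_q by lra. ring.
Qed.

(* Integration by parts against [ln (S w + l0)] produces [I0]. *)
Lemma RInt_mK_rise th :
  RInt (mK th) th (th + d) = Lam (th + d) * ln (S + l0) - Lam th * ln l0 - I0 th.
Proof.
  rewrite RInt_mK_rise_substitution. unfold I0.
  rewrite (RInt_by_parts (fun w => Lam (th + d * q w)) (fun w => d * dq w * ls (th + d * q w))
             (fun w => ln (S * w + l0)) (fun w => S / (S * w + l0))); try lra.
  - eq_in_R. rewrite q_0, q_1, Rmult_0_r, Rplus_0_r, Rmult_1_r, Rmult_0_r, Rmult_1_r, Rplus_0_l.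
    ring.
  - intros x _.
    apply (is_derive_comp Lam (fun w => th + d * q w)); [apply is_derive_Lam | apply is_derive_inner].
  - intros x Hx. assert (Hw := weight_pos x ltac:(lra)). auto_derive; [lra | field; lra].
  - intros x _. apply (continuous_mult (fun w => d * dq w) (fun w => ls (th + d * q w))).
    + exact (continuous_scal_r d dq x (continuous_dq x)).
    + apply (continuous_comp (fun w => th + d * q w) ls); [apply continuous_inner | apply continuous_ls].
  - intros x Hx. apply (continuous_inv_weight (fun _ => S)); [lra | apply continuous_const].
Qed.

Lemma RInt_mK th : 0 <= th -> th + d <= tau ->
  RInt (mK th) 0 tau = ln (S + l0) * Lam tau - I0 th.
Proof.
  intros H1 H2.
  rewrite <- (RInt_Chasles_R (mK th) 0 (th + d) tau), <- (RInt_Chasles_R (mK th) 0 th (th + d))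
    by apply ex_RInt_mK.
  rewrite RInt_mK_before, RInt_mK_rise, RInt_mK_after by auto. eq_in_R. ring.
Qed.


Lemma RInt_la th : RInt (la th) 0 tau = l0 * tau + S * (Psi (tau - th) - Psi (- th)).
Proof.
  assert (Epsi : forall a b, ex_RInt (psi k d) a b)
    by (intros; apply ex_RInt_of_continuous; intros; apply continuous_psi).
  assert (Es : ex_RInt (fun t => psi k d (t + - th)) 0 tau).
  { apply ex_RInt_of_continuous. intros.
    apply (continuous_comp (fun t => t + - th) (psi k d)); [|apply continuous_psi].
    apply continuity_pt_filterlim, continuity_pt_plus; [apply continuity_pt_id | continuity_const]. }
  unfold la, lam.
  rewrite (RInt_plus_R (fun t => S * psi k d (t - th)) (fun _ => l0));
    [| apply ex_RInt_scal_R, Es | apply ex_RInt_const].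
  rewrite (RInt_scal_R (fun t => psi k d (t - th))) by exact Es.
  rewrite RInt_const_R.
  change (fun t => psi k d (t - th)) with (fun t => psi k d (t + - th)).
  rewrite (RInt_translate (psi k d) 0 tau (- th)) by apply Epsi.
  assert (C := RInt_Chasles_R (psi k d) 0 (0 + - th) (tau + - th) (Epsi _ _) (Epsi _ _)).
  unfold Psi. rewrite Rplus_0_l in *. replace (tau - th) with (tau + - th) by ring.
  eq_in_R. rewrite <- C. ring.
Qed.

(* Both intensities equal [l0] before [min theta theta0], where the integrand
   vanishes: the divergence may be integrated from [0]. *)
Lemma J_KL_from_0 th : 0 <= th <= tau -> 0 <= th0 <= tau ->
  J_KL S h l0 k d tau th0 th = RInt (Jint th) 0 tau.
Proof.
  intros H1 H2. unfold J_KL.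
  rewrite (RInt_ext_R _ (Jint th)) by (intros; apply J_KL_integrand).
  assert (EJ : forall a b, ex_RInt (Jint th) a b)
    by (intros; apply ex_RInt_of_continuous; intros; apply continuous_Jint).
  rewrite <- (RInt_Chasles_R (Jint th) 0 (Rmin th th0) tau) by apply EJ.
  rewrite (RInt_ext_R (Jint th) (fun _ => 0) 0), RInt_const_R.
  - rewrite Rmult_0_r, Rplus_0_l. reflexivity.
  - intros x Hx. rewrite Rmin_left, Rmax_right in Hx by (destruct_minmax; lra).
    unfold Jint, mK, la, ls, lam, lam_star.
    rewrite !psi_nonpos by (destruct_minmax; lra). rewrite !Rmult_0_r, !Rplus_0_l. ring.
Qed.

Lemma J_representation th : 0 <= th -> th + d <= tau -> 0 <= th0 <= tau ->
  J_KL S h l0 k d tau th0 th = C1 + S * (Psi (tau - th) - Psi (- th)) + I0 th.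
Proof.
  intros H1 H2 H3. rewrite J_KL_from_0 by lra.
  assert (El : ex_RInt (la th) 0 tau)
    by (apply ex_RInt_of_continuous; intros; apply continuous_la).
  assert (Ell : ex_RInt (fun t => ls t * ln (ls t)) 0 tau).
  { apply ex_RInt_of_continuous. intros z _.
    apply (continuous_mult ls (fun t => ln (ls t))); [apply continuous_ls|].
    apply continuous_ln_comp; [apply continuous_ls | assert (P := ls_ge z); lra]. }
  assert (Ed1 : ex_RInt (fun t => la th t - ls t) 0 tau)
    by (apply ex_RInt_minus_R; [exact El | apply ex_RInt_ls]).
  assert (Ed2 : ex_RInt (fun t => la th t - ls t - mK th t) 0 tau)
    by (apply (ex_RInt_minus_R (fun t => la th t - ls t)); [exact Ed1 | apply ex_RInt_mK]).
  unfold Jint.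
  rewrite (RInt_plus_R (fun t => la th t - ls t - mK th t)) by assumption.
  rewrite (RInt_minus_R (fun t => la th t - ls t)) by (assumption || apply ex_RInt_mK).
  rewrite (RInt_minus_R (la th)) by (assumption || apply ex_RInt_ls).
  rewrite RInt_mK, RInt_la by auto. unfold C1, Lam. eq_in_R. ring.
Qed.

Definition I0_integrand u t := Lam (u + d * q t) * (S / (S * t + l0)).

Lemma is_derive_I0_integrand u t :
  is_derive (fun z => I0_integrand z t) u (ls (u + d * q t) * (S / (S * t + l0))).
Proof.
  unfold I0_integrand.
  apply (is_derive_scal_l (fun z => Lam (z + d * q t)) u _ (S / (S * t + l0))).
  replace (ls (u + d * q t)) with (1 * ls (u + d * q t)) by ring.
  apply (is_derive_comp Lam (fun z => z + d * q t)); [apply is_derive_Lam|].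
  auto_derive; auto.
Qed.

Lemma Derive_I0_integrand u t :
  Derive (fun z => I0_integrand z t) u = ls (u + d * q t) * (S / (S * t + l0)).
Proof. apply is_derive_unique, is_derive_I0_integrand. Qed.

Lemma continuity_2d_second (f : R -> R) x y :
  continuity_pt f y -> continuity_2d_pt (fun _ v => f v) x y.
Proof.
  intros H. apply (continuity_1d_2d_pt_comp f (fun _ v => v)); auto.
  apply continuity_2d_pt_id2.
Qed.

Lemma is_derive_I0 th :
  is_derive I0 th (RInt (fun w => ls (th + d * q w) * (S / (S * w + l0))) 0 1).
Proof.
  rewrite <- (RInt_ext_R (fun t => Derive (fun u => I0_integrand u t) th))
    by (intros; apply Derive_I0_integrand).
  apply (is_derive_RInt_param I0_integrand 0 1 th).
  - exists (mkposreal 1 Rlt_0_1). intros y _ t _.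
    eexists. apply is_derive_I0_integrand.
  - intros t Ht. rewrite Rmin_left, Rmax_right in Ht by lra.
    apply (continuity_2d_pt_ext (fun u v => ls (u + d * q v) * (S / (S * v + l0))));
      [intros; rewrite Derive_I0_integrand; reflexivity|].
    apply continuity_2d_pt_mult.
    + apply (continuity_1d_2d_pt_comp ls (fun u v => u + d * q v));
        [apply continuity_pt_filterlim, continuous_ls|].
      apply continuity_2d_pt_plus; [apply continuity_2d_pt_id1|].
      apply (continuity_2d_second (fun v => d * q v)), continuity_pt_mult;
        [continuity_const | apply continuity_pt_filterlim, continuous_q].
    + apply (continuity_2d_second (fun v => S / (S * v + l0))), continuity_pt_filterlim.
      apply (continuous_inv_weight (fun _ => S)); [lra | apply continuous_const].
  - exists (mkposreal 1 Rlt_0_1). intros y _. apply ex_RInt_of_continuous.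
    intros z Hz. rewrite Rmin_left, Rmax_right in Hz by lra.
    apply (continuous_mult (fun w => Lam (y + d * q w)) (fun w => S / (S * w + l0))).
    + apply (continuous_comp (fun w => y + d * q w) Lam);
        [apply continuous_inner | apply continuous_Lam].
    + apply (continuous_inv_weight (fun _ => S)); [lra | apply continuous_const].
Qed.

(* The function whose level set [F = 1] locates the minimiser. *)
Definition F th := (S + h) * G (th - th0) + l0 * c0.

Lemma derivative_I0_F th :
  RInt (fun w => ls (th + d * q w) * (S / (S * w + l0))) 0 1 = S * F th.
Proof.
  unfold F, G, c0.
  assert (E1 := ex_RInt_Gi (th - th0) 0 1 ltac:(lra) ltac:(lra)).
  assert (E2 := ex_RInt_c0).
  rewrite <- (RInt_scal_R (Gi (th - th0)) 0 1 (S + h) E1),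
    <- (RInt_scal_R _ 0 1 l0 E2).
  rewrite <- (RInt_plus_R (fun x => (S + h) * Gi (th - th0) x) (fun x => l0 * (1 / (S * x + l0))))
    by (apply ex_RInt_scal_R; assumption).
  rewrite <- RInt_scal_R by (apply ex_RInt_plus_R; apply ex_RInt_scal_R; assumption).
  apply RInt_ext_R. intros x Hx. rewrite Rmin_left, Rmax_right in Hx by lra.
  unfold ls, lam_star, Gi. replace (th + d * q x - th0) with (th - th0 + d * q x) by ring.
  field. apply Rgt_not_eq, weight_pos; lra.
Qed.

Lemma is_derive_J th : 0 <= th0 <= tau -> 0 < th -> th + d < tau ->
  is_derive (J_KL S h l0 k d tau th0) th (S * (F th - 1)).
Proof.
  intros H0 H1 H2.
  apply (is_derive_ext_loc (fun x => C1 + S * (Psi (tau - x) - Psi (- x)) + I0 x)).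
  { apply (filter_imp (fun y => 0 < y < tau - d)).
    - intros y Hy. symmetry. apply J_representation; lra.
    - apply (open_and _ _ (open_gt 0) (open_lt (tau - d))). lra. }
  assert (D1 : is_derive (fun x => Psi (tau - x)) th (-1 * psi k d (tau - th))).
  { apply (is_derive_comp Psi (fun x => tau - x)); [apply is_derive_Psi | auto_derive; auto; ring]. }
  assert (D2 : is_derive (fun x => Psi (- x)) th (-1 * psi k d (- th))).
  { apply (is_derive_comp Psi (fun x => - x)); [apply is_derive_Psi | auto_derive; auto; ring]. }
  rewrite psi_ge_delta in D1 by lra. rewrite psi_nonpos in D2 by lra.
  assert (DI := is_derive_I0 th). rewrite derivative_I0_F in DI.
  assert (D := is_derive_plus _ _ th _ _
                 (is_derive_plus _ _ th _ _ (is_derive_const C1 th)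
                    (is_derive_scal _ th S _ (is_derive_minus _ _ th _ _ D1 D2))) DI).
  replace (S * (F th - 1)) with (plus (plus 0 (scal S (minus (-1 * 1) (-1 * 0)))) (S * F th))
    by (change (0 + S * (-1 * 1 + - (-1 * 0)) + S * F th = S * (F th - 1)); ring).
  exact D.
Qed.

Lemma F_mono a b : a <= b -> F a <= F b.
Proof.
  intros H. unfold F. assert (G (a - th0) <= G (b - th0)) by (apply G_mono; lra). nra.
Qed.

Lemma F_continuous : continuity F.
Proof.
  intros x. unfold F. apply continuity_pt_plus; [|continuity_const].
  apply continuity_pt_mult; [continuity_const|].
  apply (continuity_pt_comp (fun t => t - th0) G); [|apply G_continuous].
  apply continuity_pt_minus; [apply continuity_pt_id | continuity_const].
Qed.

Lemma F_low th : th <= th0 - d -> F th = l0 * c0.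
Proof. intros H. unfold F. rewrite G_low by lra. ring. Qed.

Lemma F_high th : th0 + d <= th -> F th = (S + h + l0) * c0.
Proof. intros H. unfold F. rewrite G_high by lra. ring. Qed.

Lemma F_theta0 : F th0 = 1 + h * G 0.
Proof. unfold F. rewrite Rminus_diag. assert (H := G0_identity). lra. Qed.

Lemma F_oscillation x y : Rabs (F x - F y) <= (S + h) * c0.
Proof.
  unfold F. replace ((S + h) * G (x - th0) + l0 * c0 - ((S + h) * G (y - th0) + l0 * c0))
    with ((S + h) * (G (x - th0) - G (y - th0))) by ring.
  rewrite Rabs_mult, Rabs_pos_eq by lra. apply Rmult_le_compat_l; [lra|].
  assert (H1 := G_range (x - th0)). assert (H2 := G_range (y - th0)).
  apply Rabs_le; lra.
Qed.

Lemma F_root_exists : 1 < (S + h + l0) * c0 ->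
  exists thh, th0 - d < thh < th0 + d /\ F thh = 1.
Proof.
  intros Hcross. assert (Hlow : l0 * c0 < 1).
  { rewrite c0_val. assert (Hx : 0 < S / l0) by (apply Rdiv_lt_0_compat; auto).
    assert (Hln := ln_1_plus_lt (S / l0) Hx).
    set (L := ln (1 + S / l0)) in *.
    assert (Hl0L : l0 * L < S).
    { replace S with (l0 * (S / l0)) by (field; lra).
      apply Rmult_lt_compat_l; lra. }
    replace (l0 * (L / S)) with (l0 * L * / S) by (field; lra).
    replace 1 with (S * / S) by (field; lra).
    apply Rmult_lt_compat_r; [apply Rinv_0_lt_compat|]; lra. }
  destruct (IVT_gen F (th0 - d) (th0 + d) 1 F_continuous) as [thh [Hthh HF]].
  - rewrite F_low, F_high by lra. destruct_minmax; lra.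
  - exists thh. rewrite Rmin_left, Rmax_right in Hthh by lra.
    split; [|auto].
    assert (thh <> th0 - d) by (intros ->; rewrite F_low in HF; lra).
    assert (thh <> th0 + d) by (intros ->; rewrite F_high in HF; lra).
    lra.
Qed.

Lemma F_locally_steep thh : th0 - d < thh < th0 + d ->
  exists eta c, 0 < eta /\ 0 < c /\
    forall a b, thh - eta <= a -> a <= b -> b <= thh + eta -> c * (b - a) <= F b - F a.
Proof.
  intros Hthh. destruct (G_locally_steep (thh - th0)) as [eta [c [Heta [Hc Hsl]]]].
  { apply Rabs_def1; lra. }
  exists eta, ((S + h) * c). split; [auto | split; [nra|]].
  intros a b H1 H2 H3. unfold F.
  assert (H := Hsl (a - th0) (b - th0) ltac:(lra) ltac:(lra) ltac:(lra)).
  replace (b - th0 - (a - th0)) with (b - a) in H by ring. nra.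
Qed.

Lemma F_locally_lipschitz thh : th0 - d < thh < th0 + d -> thh <> th0 ->
  exists rho L, 0 < rho /\
    forall x, Rabs (x - thh) <= rho -> Rabs (F x - F thh) <= L * Rabs (x - thh).
Proof.
  intros Hthh Hne. destruct (G_locally_lipschitz (thh - th0)) as [rho [L [Hrho HL]]].
  { apply Rabs_def1; lra. } { lra. }
  exists rho, ((S + h) * L). split; [auto|]. intros x Hx.
  assert (H := HL (x - th0) ltac:(replace (x - th0 - (thh - th0)) with (x - thh) by ring; auto)).
  replace (x - th0 - (thh - th0)) with (x - thh) in H by ring.
  unfold F. replace ((S + h) * G (x - th0) + l0 * c0 - ((S + h) * G (thh - th0) + l0 * c0))
    with ((S + h) * (G (x - th0) - G (thh - th0))) by ring.
  rewrite Rabs_mult, Rabs_pos_eq by lra. rewrite Rmult_assoc.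
  apply Rmult_le_compat_l; lra.
Qed.

Lemma F_root_side thh : F thh = 1 ->
  (0 < h -> thh < th0) /\ (h < 0 -> th0 < thh) /\ (h <> 0 -> thh <> th0).
Proof.
  intros HF. assert (HG := G0_pos). assert (Ht := F_theta0).
  split; [|split].
  - intros Hp. destruct (Rlt_dec thh th0) as [| Hge]; auto.
    assert (F th0 <= F thh) by (apply F_mono; lra). nra.
  - intros Hn. destruct (Rlt_dec th0 thh) as [| Hle]; auto.
    assert (F thh <= F th0) by (apply F_mono; lra). nra.
  - intros Hne ->. rewrite HF in Ht. apply Hne.
    apply (Rmult_eq_reg_r (G 0)); lra.
Qed.

Lemma F_coercive thh W : th0 - d < thh < th0 + d -> 0 < W ->
  exists m, 0 < m /\ forall x, Rabs (x - thh) <= W ->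
    m * (x - thh) ^ 2 <= (F x - F thh) * (x - thh).
Proof.
  intros Hthh HW. destruct (F_locally_steep thh Hthh) as [eta [c [Heta [Hc Hsl]]]].
  exists (c * (eta / (eta + W))). split.
  - apply Rmult_lt_0_compat; [|apply Rdiv_lt_0_compat]; lra.
  - apply nondecreasing_coercive; auto. apply F_mono.
Qed.

Lemma F_lipschitz thh : th0 - d < thh < th0 + d -> thh <> th0 ->
  exists M, 0 < M /\ forall x, Rabs (F x - F thh) <= M * Rabs (x - thh).
Proof.
  intros Hthh Hne. destruct (F_locally_lipschitz thh Hthh Hne) as [rho [L [Hrho HL]]].
  assert (HB : 0 < (S + h) * c0 / rho)
    by (apply Rdiv_lt_0_compat; [apply Rmult_lt_0_compat; [|apply c0_pos]|]; lra).
  exists (Rmax L ((S + h) * c0 / rho)). split.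
  - eapply Rlt_le_trans; [exact HB | apply Rmax_r].
  - apply bounded_pointwise_lipschitz; auto. intros; apply F_oscillation.
Qed.

Lemma derivative_coercive thh W : th0 - d < thh < th0 + d -> F thh = 1 -> 0 < W ->
  exists m, 0 < m /\ forall x, Rabs (x - thh) <= W ->
    m * (x - thh) ^ 2 <= S * (F x - 1) * (x - thh).
Proof.
  intros Hthh HF HW. destruct (F_coercive thh W Hthh HW) as [m [Hm Hco]].
  exists (S * m). split; [nra|]. intros x Hx. rewrite <- HF, !Rmult_assoc.
  apply Rmult_le_compat_l; [lra | apply Hco; auto].
Qed.

Lemma derivative_lipschitz thh : th0 - d < thh < th0 + d -> F thh = 1 -> thh <> th0 ->
  exists M, 0 < M /\ forall x, Rabs (S * (F x - 1)) <= M * Rabs (x - thh).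
Proof.
  intros Hthh HF Hne. destruct (F_lipschitz thh Hthh Hne) as [M [HM HL]].
  exists (S * M). split; [nra|]. intros x.
  rewrite <- HF, Rabs_mult, Rabs_pos_eq, Rmult_assoc by lra.
  apply Rmult_le_compat_l; [lra | apply HL].
Qed.

End Divergence.
End Kernel.
End Profile.

Theorem proposition1 (S lambda0 kappa delta tau alpha beta theta0 h : R)
  (HS : 0 < S) (Hl0 : 0 < lambda0) (Hk : 0 < kappa < 1/2) (Hd : 0 < delta)
  (Htau : 0 < tau) (Hab : alpha < beta)
  (HTheta : 0 <= alpha - delta /\ beta + delta <= tau - delta)
  (Hth0 : alpha < theta0 < beta)
  (Hh : h > S / ln (1 + S / lambda0) - S - lambda0) :
  let J := J_KL S h lambda0 kappa delta tau theta0 in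
  let inTheta := fun th => alpha - delta < th < beta + delta in
  exists thhat : R,
    inTheta thhat /\
    (forall th, inTheta th -> ex_derive J th) /\
    (forall th, inTheta th -> th <> thhat -> J thhat < J th) /\
    (forall th, inTheta th -> (Derive J th = 0 <-> th = thhat)) /\
    (h > 0 -> theta0 - delta < thhat < theta0) /\
    (h < 0 -> theta0 < thhat < theta0 + delta) /\
    (h = 0 -> thhat = theta0) /\
    (h <> 0 ->
      exists m M : R, 0 < m /\ 0 < M /\
        forall th, inTheta th ->
          m * Rabs (th - thhat) <= Rabs (Derive J th) <= M * Rabs (th - thhat) /\
          m / 2 * (th - thhat) ^ 2 <= J th - J thhat <= M / 2 * (th - thhat) ^ 2).
Proof.
  intros J inTheta. destruct Hk as [Hk0 Hk_half]. assert (Hk1 : kappa < 1) by lra.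
  destruct (h_condition S lambda0 HS Hl0 h Hh) as [HSh Hcross].
  destruct (F_root_exists kappa delta Hk0 Hd S lambda0 HS Hl0 h theta0 Hcross)
    as [thh [Hthh HF]].
  set (D := fun th => S * (F kappa delta S lambda0 h theta0 th - 1)).
  assert (Hder : forall th, inTheta th -> is_derive J th (D th))
    by (intros th Hth; apply is_derive_J; unfold inTheta in Hth; lra).
  assert (HDer : forall th, inTheta th -> Derive J th = D th)
    by (intros; apply is_derive_unique, Hder; auto).
  destruct (derivative_coercive kappa delta Hk0 Hk1 Hd S lambda0 HS Hl0 h theta0 HSh thh
              (beta - alpha + 2 * delta) Hthh HF ltac:(lra)) as [m [Hm Hco]].
  destruct (coercive_critical_point J D (alpha - delta) (beta + delta) thh m Hder)
    as [Hmin [Hzero [Habs Hquad]]];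
    [unfold inTheta in *; lra | unfold D; rewrite HF; ring | exact Hm
    | intros th Hth; apply Hco, Rabs_le; unfold inTheta in *; lra |].
  destruct (F_root_side kappa delta Hk0 Hk1 Hd S lambda0 HS Hl0 h theta0 HSh thh HF)
    as [Hpos [Hneg Hne]].
  exists thh. split; [unfold inTheta; lra|]. split; [intros; eexists; apply Hder; auto|].
  split; [auto|]. split; [intros; rewrite HDer; auto|].
  split; [intros; split; [lra | auto]|]. split; [intros; split; [auto | lra]|].
  split.
  { intros ->. symmetry. apply Hzero; [unfold inTheta; lra|].
    unfold D. rewrite F_theta0 by auto. ring. }
  intros Hh0. destruct (derivative_lipschitz kappa delta Hk0 Hk1 Hd S lambda0 HS Hl0 h theta0
                          HSh thh Hthh HF (Hne Hh0)) as [M [HM HL]].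
  exists m, M. split; [auto|]. split; [auto|]. intros th Hth.
  rewrite HDer by auto. split; [split; [apply Habs | apply HL]; auto | split; [apply Hquad; auto|]].
  apply (quadratic_growth_upper J D (alpha - delta) (beta + delta)); auto;
    [unfold inTheta in *; lra | unfold D; rewrite HF; ring | intros; apply product_upper_of_abs, HL].
Qed.
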